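(* Let $E=[n]$, let $f:2^E\to\mathbb{Z}_{\ge0}$ be a nonnegative integer-valued submodular function with $M:=\|f\|_\infty<\infty$, and let $d\in\mathbb{Z}^n$ be an integer direction with at least one positive entry. Let $\hat E=E\cup\{n+1\}$ and, for $C\in\mathbb{R}$, define $\hat f(\cdot;C):2^{\hat E}\to\mathbb{R}$ by \[ \hat f(S;C)=\begin{cases} f(S) & \text{if } n+1\notin S,\\ f(S\setminus\{n+1\})+C & \text{if } n+1\in S\subsetneq \hat E,\\ f(E) & \text{if } S=\hat E.\end{cases} \] Let $\hat d=(d_1,\dots,d_n,0)\in\mathbb{Z}^{n+1}$ and let $e_{n+1}$ be the $(n+1)$-st standard basis vector. If $C>M\|d\|_1$, then \[ \max\bigl\{\lambda_1:\ \lambda_1,\lambda_2\in\mathbb{R},\ \lambda_1\hat d+\lambda_2 e_{n+1}\in B(\hat f(\cdot;C))\bigr\} =\max\bigl\{\lambda\in\mathbb{R}:\ \lambda d\in P(f)\bigr\}. \]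
   Context: For a set function $g$ on a finite ground set $V$ and $x\in\mathbb{R}^V$, write $x(S)=\sum_{i\in S}x_i$. The extended polymatroid is $P(g)=\{x\in\mathbb{R}^V: x(S)\le g(S)\ \forall S\subseteq V\}$ and the base polytope is $B(g)=\{x\in P(g): x(V)=g(V)\}$. $\|d\|_1=\sum_i|d_i|$. *)

From HB Require Import structures.
From mathcomp Require Import all_boot all_order all_algebra.
From mathcomp Require Import reals.
Set Implicit Arguments. Unset Strict Implicit. Unset Printing Implicit Defensive.
Import Order.TTheory GRing.Theory Num.Theory.
Local Open Scope ring_scope.

(* Ground set E = [n] is modelled by 'I_n; hat E = E ∪ {n+1} by 'I_n.+1,
   the new element n+1 being ord_max. Vectors x ∈ R^V are functions V -> R. *)

Definition xsum (R : realType) (V : finType) (x : V -> R) (S : {set V}) : R :=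
  \sum_(i in S) x i.

Definition in_P (R : realType) (V : finType) (g : {set V} -> R) (x : V -> R) : Prop :=
  forall S : {set V}, xsum x S <= g S.

Definition in_B (R : realType) (V : finType) (g : {set V} -> R) (x : V -> R) : Prop :=
  in_P g x /\ xsum x setT = g setT.

Definition submodular (V : finType) (f : {set V} -> nat) : Prop :=
  forall S T : {set V}, (f (S :|: T) + f (S :&: T) <= f S + f T)%N.

Definition supnorm (V : finType) (f : {set V} -> nat) : nat := \max_(S : {set V}) f S.

Definition norm1 (n : nat) (d : 'I_n -> int) : int := \sum_(i < n) `|d i|.

Definition drop_last (n : nat) (S : {set 'I_n.+1}) : {set 'I_n} :=
  [set i : 'I_n | widen_ord (leqnSn n) i \in S].

Definition fhat (R : realType) (n : nat) (f : {set 'I_n} -> nat) (C : R)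
  (S : {set 'I_n.+1}) : R :=
  if ord_max \notin S then (f (drop_last S))%:R
  else if S == setT then (f setT)%:R
  else (f (drop_last S))%:R + C.

Definition dhat (R : realType) (n : nat) (d : 'I_n -> int) (i : 'I_n.+1) : R :=
  match unlift ord_max i with Some j => (d j)%:~R | None => 0 end.

Definition e_last (R : realType) (n : nat) (i : 'I_n.+1) : R := (i == ord_max)%:R.

From HB Require Import structures.
From mathcomp Require Import all_boot all_order all_algebra.
From mathcomp Require Import reals.
From mathcomp Require Import lra.
Set Implicit Arguments. Unset Strict Implicit. Unset Printing Implicit Defensive.
Import Order.TTheory GRing.Theory Num.Theory.
Local Open Scope ring_scope.

(* The right-hand maximum lam is the least ratio f(S) / d(S) over the sets
   with d(S) > 0.  On the sets avoiding n+1, a point lam1 dhat + lam2 e_(n+1)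
   of B(fhat) is just lam1 d in P(f), so lam1 <= lam.  Conversely, take
   lam1 = lam and let the equality on hat E fix lam2.  The only new
   constraints come from the sets S + (n+1), and they are slack once
   C > M ||d||_1: the constraint at a singleton {i0} with d_i0 >= 1 gives
   lam <= M, and d(S) - d(E) + d_i0 <= ||d||_1. *)

Section RayInPolymatroid.
Variables (R : realType) (V : finType).

Lemma xsum_scale (l : R) (x : V -> R) S :
  xsum (fun i => l * x i) S = l * xsum x S.
Proof. by rewrite /xsum mulr_sumr. Qed.

Lemma ler_xsum_subT_norm1 (x : V -> R) (i0 : V) S :
  xsum x S - xsum x setT + x i0 <= \sum_i `|x i|.
Proof.
rewrite /xsum -(big_pred1_eq +%R i0) big_mkcond.
rewrite [\sum_(i in S) _]big_mkcond [\sum_(i in setT) _]big_mkcond -!sumrB.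
rewrite -big_split; apply: ler_sum => i _ /=; rewrite in_setT.
have := ler_norm (x i); have : - x i <= `|x i| by rewrite -normrN ler_norm.
by case: (i \in S); case: (i == i0); lra.
Qed.

Variables (g : {set V} -> R) (x : V -> R).
Hypothesis g_ge0 : forall S, 0 <= g S.

Lemma exists_max_ray_in_P S0 : 0 < xsum x S0 ->
  exists2 lam, in_P g (fun i => lam * x i) &
    forall l, in_P g (fun i => l * x i) -> l <= lam.
Proof.
move=> xS0; have [S xS minS] :=
  arg_minP (P := fun S => 0 < xsum x S) (fun S => g S / xsum x S) xS0.
have lam_ge0 : 0 <= g S / xsum x S by rewrite divr_ge0 // ltW.
exists (g S / xsum x S) => [T|l /(_ S)]; rewrite xsum_scale; last first.
  by rewrite ler_pdivlMr.
have [xT|xT] := ltrP 0 (xsum x T); first by rewrite -ler_pdivlMr // minS.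
exact: le_trans (mulr_ge0_le0 lam_ge0 xT) (g_ge0 T).
Qed.

End RayInPolymatroid.

Section Extension.
Variables (R : realType) (n : nat) (d : 'I_n -> int).

Lemma lift_max_widen (i : 'I_n) : lift ord_max i = widen_ord (leqnSn n) i.
Proof. by apply: val_inj; rewrite /= /bump leqNgt ltn_ord. Qed.

Lemma drop_lastT : drop_last [set: 'I_n.+1] = [set: 'I_n].
Proof. by apply/setP => i; rewrite !inE. Qed.

Lemma drop_last_lift (S : {set 'I_n}) :
  drop_last [set lift ord_max i | i in S] = S.
Proof.
by apply/setP => i; rewrite inE -lift_max_widen (mem_imset _ _ (@lift_inj _ _)).
Qed.

Lemma xsum_extension (l1 l2 : R) (S : {set 'I_n.+1}) :
  xsum (fun i => l1 * @dhat R n d i + l2 * @e_last R n i) S =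
  l1 * xsum (fun i => (d i)%:~R) (drop_last S) + (if ord_max \in S then l2 else 0).
Proof.
rewrite /xsum big_mkcond big_ord_recr /= /dhat /e_last unlift_none eqxx.
rewrite mulr0 add0r mulr1 mulr_sumr [in RHS]big_mkcond; congr (_ + _).
apply: eq_bigr => i _; rewrite inE -lift_max_widen liftK.
by rewrite eq_sym (negPf (neq_lift _ _)) mulr0 addr0; case: (_ \in S); rewrite ?mulr0.
Qed.

End Extension.

Section ExtendedBase.
Variables (R : realType) (n : nat) (f : {set 'I_n} -> nat) (d : 'I_n -> int)
  (C : R).

Lemma in_B_extension_in_P (l1 l2 : R) :
  in_B (fhat f C) (fun i => l1 * @dhat R n d i + l2 * @e_last R n i) ->
  in_P (fun S => (f S)%:R) (fun i => l1 * (d i)%:~R).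
Proof.
move=> [P_hat _] S; have := P_hat [set lift ord_max i | i in S].
have max_notin : ord_max \notin [set lift ord_max i | i in S].
  by apply/imsetP => -[i _ /eqP]; rewrite (negPf (neq_lift _ _)).
by rewrite xsum_extension /fhat (negPf max_notin) drop_last_lift
  addr0 xsum_scale.
Qed.

Lemma norm1_intr : (norm1 d)%:~R = \sum_i `|(d i)%:~R : R|.
Proof. by rewrite /norm1 rmorph_sum; apply: eq_bigr => i _; rewrite -intr_norm. Qed.

Lemma in_P_in_B_extension (lam : R) (i0 : 'I_n) :
  0 <= lam -> in_P (fun S => (f S)%:R) (fun i => lam * (d i)%:~R) ->
  0 < d i0 -> (supnorm f)%:R * (norm1 d)%:~R < C ->
  in_B (fhat f C) (fun i => lam * @dhat R n d i +
    ((f setT)%:R - lam * xsum (fun i => (d i)%:~R) setT) * @e_last R n i).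
Proof.
move=> lam_ge0 P_lam di0 C_gt.
set M : R := (supnorm f)%:R; set dx := fun i => (d i)%:~R : R.
have f_le_M S : (f S)%:R <= M by rewrite ler_nat; apply: leq_bigmax.
have dx_ge1 : 1 <= dx i0 by rewrite ler1z.
have lam_le_M : lam <= M.
  have := P_lam [set i0]; rewrite xsum_scale /xsum big_set1 => lam_d.
  apply: le_trans (f_le_M [set i0]); apply: le_trans lam_d.
  by rewrite ler_peMr.
have norm1_ge S : xsum dx S - xsum dx setT + dx i0 <= (norm1 d)%:~R.
  by rewrite norm1_intr; apply: ler_xsum_subT_norm1.
split => [S|]; last first.
  by rewrite xsum_extension drop_lastT /fhat in_setT eqxx /=; lra.
rewrite xsum_extension /fhat; case: (boolP (ord_max \in S)) => [_|_] /=; last first.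
  by rewrite addr0 -xsum_scale; apply: P_lam.
case: eqP => [->|_]; first by rewrite drop_lastT; lra.
set u := xsum dx (drop_last S) - xsum dx setT.
have slack : lam * u + M <= M * (norm1 d)%:~R.
  have dx_le := norm1_ge setT; rewrite subrr add0r in dx_le.
  have u_le := norm1_ge (drop_last S); rewrite -/u in u_le.
  have M_ge0 : 0 <= M by apply: le_trans lam_le_M.
  have [u_ge0|u_lt0] := lerP 0 u.
  - have : lam * u <= M * u by rewrite ler_wpM2r.
    have : M * u + M <= M * (norm1 d)%:~R.
      by rewrite -[X in _ + X]mulr1 -mulrDr ler_wpM2l //; lra.
    lra.
  - have : lam * u <= 0 by rewrite mulr_ge0_le0 // ltW.
    have : M <= M * (norm1 d)%:~R by rewrite ler_peMr //; lra.
    lra.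
have := f_le_M setT; have := ler0n R (f (drop_last S)); rewrite /u in slack.
lra.
Qed.

End ExtendedBase.

Theorem lemma3 (R : realType) (n : nat) (f : {set 'I_n} -> nat)
    (d : 'I_n -> int) (C : R) :
    submodular f ->
    (exists i, 0 < d i) ->
    (supnorm f)%:R * (norm1 d)%:~R < C ->
    exists lam : R,
      [/\ in_P (fun S => (f S)%:R) (fun i => lam * (d i)%:~R),
          (forall l : R, in_P (fun S => (f S)%:R) (fun i => l * (d i)%:~R) -> l <= lam),
          (exists l2 : R,
             in_B (fhat f C) (fun i => lam * @dhat R n d i + l2 * @e_last R n i)) &
          (forall l1 l2 : R,
             in_B (fhat f C) (fun i => l1 * @dhat R n d i + l2 * @e_last R n i) -> l1 <= lam)].
Proof.
move=> _ [i0 di0] C_gt.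
have f_ge0 S : 0 <= (f S)%:R :> R by rewrite ler0n.
have d_i0_pos : 0 < xsum (fun i => (d i)%:~R : R) [set i0].
  by rewrite /xsum big_set1 ltr0z.
have [lam P_lam lam_max] := exists_max_ray_in_P f_ge0 d_i0_pos.
have lam_ge0 : 0 <= lam.
  by apply: lam_max => S; rewrite xsum_scale mul0r.
exists lam; split => //.
- by eexists; apply: in_P_in_B_extension P_lam di0 C_gt.
- by move=> l1 l2 /in_B_extension_in_P; apply: lam_max.
Qed.
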